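(* For each $i\ge1$ let $f_i$ be a non-negative completely multiplicative function with $f_i(p) < 1$ for every prime $p$, and let $y_i \to \infty$ be a sequence of parameters. Define $\alpha_i = \frac{(\log \log y_i)^2}{\log y_i}$. Suppose that for all $i$ \[ \sum_p \log p\, \frac{f_i(p)}{1-f_i(p)} < \log y_i - \frac{\log y_i}{\log \log y_i}\] and that \[\sum_{\substack{p,\,k\ge1\\ k \log p > \log y_i/(\log \log y_i)^4}} f_i(p)^k p^{k\alpha_i} = o(1), \qquad i \to \infty,\] the sums being over primes $p$. Then \[\sum_{n \leq y_i} f_i(n) = (1 + o(1)) \sum_{n = 1}^\infty f_i(n), \qquad i \to \infty.\] *)

From HB Require Import structures.
From mathcomp Require Import all_boot all_order all_algebra.
From mathcomp Require Import all_classical all_reals all_analysis.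
Set Implicit Arguments. Unset Strict Implicit. Unset Printing Implicit Defensive.
Import Order.TTheory GRing.Theory Num.Theory.
Local Open Scope ring_scope.

Definition completely_multiplicative (R : realType) (f : nat -> R) : Prop :=
  f 1%N = 1 /\ forall m n : nat, (0 < m)%N -> (0 < n)%N -> f (m * n)%N = f m * f n.

Definition alpha_param (R : realType) (y : R) : R := (ln (ln y)) ^+ 2 / ln y.

From HB Require Import structures.
From mathcomp Require Import all_boot all_order all_algebra.
From mathcomp Require Import all_classical all_reals all_analysis.
From mathcomp Require Import ring lra.
Import Order.TTheory GRing.Theory Num.Theory.
Import numFieldNormedType.Exports.
Local Open Scope classical_set_scope.

(* Rankin's trick on a finite Euler product.  Write L = log y, l = log log y,
   a = alpha = l^2 / L and T = L / l^4, so that a T = 1 / l^2.  Truncate to the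
   set N_M of integers whose prime factors and exponents are all at most M: it
   contains 1, ..., M and the sums of f over it factor over the primes p <= M, so
     y^a sum_(n in N_M, n > y) f n <= sum_(n in N_M) f n n^a
                                    = prod_p sum_(k <= M) f(p)^k p^(k a).
   In an Euler factor the terms with k log p <= T satisfy
   p^(k a) <= 1 + k a log p / (1 - a T), and sum_k k f^k <= f / (1 - f) sum_k f^k,
   so the factor is at most (sum_k f(p)^k) times
   exp (a / (1 - a T) log p f(p) / (1 - f(p)) + sum_(k log p > T) f(p)^k p^(k a)).
   The two hypotheses bound the total exponent by l^3 / (l + 1) + 1 <= l^2 - l + 2
   while y^a = e^(l^2), so the part of the sum beyond y is at most e^(2 - l)
   times the whole, and sum_(n <= y) f n >= (1 - e^(2 - l)) sum_n f n. *)

Fixpoint pow_prods (ps : seq nat) (K : nat) : seq nat :=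
  if ps is p :: ps' then
    [seq p ^ k * m | k <- index_iota 0 K.+1, m <- pow_prods ps' K]
  else [:: 1].

Lemma pow_prods_nil K : pow_prods [::] K = [:: 1]. Proof. by []. Qed.
Lemma pow_prods_cons p ps K : pow_prods (p :: ps) K =
  [seq p ^ k * m | k <- index_iota 0 K.+1, m <- pow_prods ps K].
Proof. by []. Qed.
Arguments pow_prods : simpl never.

Lemma pow_prods_gt0 {ps K n} : all prime ps -> n \in pow_prods ps K -> 0 < n.
Proof.
elim: ps n => [|p ps IH] n /=; rewrite ?pow_prods_nil ?pow_prods_cons.
  by rewrite inE => _ /eqP->.
case/andP=> pp aps /seq.allpairsP[[k m] /= [_ hm ->]].
by rewrite muln_gt0 expn_gt0 prime_gt0 // (IH m).
Qed.

Lemma coprime_pow_prods {ps K q n} : prime q -> q \notin ps -> all prime ps ->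
  n \in pow_prods ps K -> coprime q n.
Proof.
move=> qP; elim: ps n => [|p ps IH] n /=; rewrite ?pow_prods_nil ?pow_prods_cons.
  by move=> _ _; rewrite inE => /eqP->; exact: coprimen1.
rewrite inE negb_or => /andP[qp qps] /andP[pp aps] /seq.allpairsP[[k m] /= [_ hm ->]].
rewrite coprimeMr (IH m qps aps hm) andbT coprimeXr //.
by rewrite prime_coprime // dvdn_prime2 // (negbTE qp).
Qed.

Lemma pow_prods_uniq ps K : uniq ps -> all prime ps -> uniq (pow_prods ps K).
Proof.
elim: ps => [|p ps IH] //= /andP[pps ups] /andP[pp aps].
rewrite pow_prods_cons; apply: allpairs_uniq; rewrite ?iota_uniq ?IH //.
move=> x x' /seq.allpairsP[[a b] [_ hb ->]] /seq.allpairsP[[a' b'] [_ hb' ->]] /= E.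
have p0 := prime_gt0 pp.
have cb := coprime_pow_prods pp pps aps hb.
have cb' := coprime_pow_prods pp pps aps hb'.
have Ea : a = a'.
  move: (congr1 (logn p) E).
  rewrite !lognM ?expn_gt0 ?p0 ?(pow_prods_gt0 aps hb) ?(pow_prods_gt0 aps hb') //.
  by rewrite !pfactorK // (logn_coprime cb) (logn_coprime cb') !addn0.
by move: E; rewrite Ea => /eqP; rewrite eqn_pmul2l ?expn_gt0 ?p0 // => /eqP->.
Qed.

Lemma logn_leq q n : logn q n <= n.
Proof.
have [qP|qNP] := boolP (prime q); last by rewrite lognE (negbTE qNP).
have [->|n0] := posnP n; first by rewrite logn0.
apply: leq_trans (ltnW (ltn_expl _ (prime_gt1 qP))) _.
exact: dvdn_leq n0 (pfactor_dvdnn q n).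
Qed.

Lemma mem_pow_prods ps K n : all prime ps -> 0 < n -> {subset primes n <= ps} ->
  (forall q, logn q n <= K) -> n \in pow_prods ps K.
Proof.
elim: ps n => [|p ps IH] n aps n0 sub_ps hK /=.
  rewrite pow_prods_nil inE eqn_leq n0 andbT leqNgt; apply/negP => n1.
  by have := sub_ps (pdiv n); rewrite mem_primes pdiv_prime // n0 pdiv_dvd => /(_ isT).
case/andP: aps => pp aps.
have [m cm En] := pfactor_coprime pp n0.
have m0 : 0 < m by move: n0; rewrite En muln_gt0 => /andP[].
rewrite pow_prods_cons; apply/seq.allpairsP; exists (logn p n, m); split => /=.
- by rewrite mem_index_iota ltnS hK.
- apply: IH => // [q|q]; last first.
    by apply: leq_trans (hK q); apply: dvdn_leq_log => //; rewrite En dvdn_mulr.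
  rewrite mem_primes => /and3P[qP _ qm].
  have : q \in p :: ps by apply: sub_ps; rewrite mem_primes qP n0 En dvdn_mulr.
  rewrite inE => /predU1P[qp|//].
  by move: cm; rewrite -qp prime_coprime // qm.
- by rewrite mulnC -En.
Qed.

Local Open Scope ring_scope.

Lemma big_pow_prods (R : comPzSemiRingType) (g : nat -> R) ps K :
  g 1%N = 1 -> (forall m n, (0 < m)%N -> (0 < n)%N -> g (m * n)%N = g m * g n) ->
  all prime ps ->
  \sum_(n <- pow_prods ps K) g n = \prod_(p <- ps) \sum_(0 <= k < K.+1) g (p ^ k)%N.
Proof.
move=> g1 gM; elim: ps => [|p ps IH] /=.
  by rewrite pow_prods_nil big_seq1 big_nil.
case/andP=> pp aps; rewrite pow_prods_cons big_allpairs_dep big_cons -IH // mulr_suml.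
apply: eq_bigr => k _; rewrite mulr_sumr big_seq [RHS]big_seq.
apply: eq_bigr => m hm; apply: gM; first by rewrite expn_gt0 prime_gt0.
exact: pow_prods_gt0 aps hm.
Qed.

Section NonnegSums.
Variables (R : numDomainType) (I : eqType) (F : I -> R).

Lemma ler_sum_cond (r : seq I) (P : pred I) : (forall i, i \in r -> 0 <= F i) ->
  \sum_(i <- r | P i) F i <= \sum_(i <- r) F i.
Proof.
move=> F0; rewrite [leRHS](bigID P) /= lerDl big_seq_cond.
by rewrite sumr_ge0 // => i /andP[/F0].
Qed.

Lemma ler_sum_subseq (s t : seq I) : uniq s -> uniq t -> {subset s <= t} ->
  (forall i, i \in t -> 0 <= F i) -> \sum_(i <- s) F i <= \sum_(i <- t) F i.
Proof.
move=> us ut st F0; rewrite [leRHS](bigID (mem s)) /=.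
have -> : \sum_(i <- t | i \in s) F i = \sum_(i <- s) F i.
  rewrite -big_filter; apply: perm_big; apply: uniq_perm; rewrite ?filter_uniq //.
  by move=> i; rewrite mem_filter andb_idr //; exact: st.
by rewrite lerDl big_seq_cond sumr_ge0 // => i /andP[/F0].
Qed.

End NonnegSums.

Lemma expR_le_1Ddiv {R : realType} {x a : R} : 0 <= x <= a -> a < 1 ->
  expR x <= 1 + x / (1 - a).
Proof.
case/andP=> x0 xa a1; have x1 : 0 < 1 - x by lra.
apply: (@le_trans _ _ (1 - x)^-1).
  rewrite -[expR x]invrK lef_pV2 ?posrE ?invr_gt0 ?expR_gt0 // -expRN.
  exact: expR_ge1Dx.
have -> : (1 - x)^-1 = 1 + x / (1 - x) by field; rewrite gt_eqF.
by rewrite lerD2l ler_wpM2l // lef_pV2 ?posrE; lra.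
Qed.

Lemma sum_natmul_expr_le {R : realFieldType} {f : R} K : 0 <= f < 1 ->
  \sum_(0 <= k < K.+1) k%:R * f ^+ k <= f / (1 - f) * \sum_(0 <= k < K.+1) f ^+ k.
Proof.
case/andP=> f0 f1; have f1' : 0 < 1 - f by lra.
have telescope : (1 - f) * \sum_(0 <= k < K.+1) k%:R * f ^+ k + K.+1%:R * f ^+ K.+1 =
    f * \sum_(0 <= k < K.+1) f ^+ k.
  elim: K => [|K IH]; first by rewrite !big_nat1 mul0r expr0; ring.
  rewrite big_nat_recr //= [in RHS]big_nat_recr //= [in RHS]mulrDr -IH.
  rewrite !exprS -!natr1; ring.
rewrite -(ler_pM2l f1') mulrA mulrCA divff ?gt_eqF // mulr1 -telescope lerDl.
by rewrite mulr_ge0 ?exprn_ge0.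
Qed.

Lemma euler_factor_le (R : realType) (f x a T : R) K :
  0 <= f < 1 -> 1 <= x -> 0 <= a -> 0 < T -> a * T < 1 ->
  \sum_(0 <= k < K.+1) f ^+ k * x `^ (k%:R * a) <=
  (\sum_(0 <= k < K.+1) f ^+ k) *
  expR (a / (1 - a * T) * ln x * (f / (1 - f)) +
        \sum_(0 <= k < K.+1 | T < k%:R * ln x) f ^+ k * x `^ (k%:R * a)).
Proof.
move=> f01 x1 a0 T0 aT1; have /andP[f0 f1] := f01.
set S := \sum_(0 <= k < K.+1) f ^+ k.
set B := \sum_(0 <= k < K.+1 | T < k%:R * ln x) _.
set c := a / (1 - a * T) * ln x.
have lnx0 : 0 <= ln x := ln_ge0 x1.
have c0 : 0 <= c by rewrite mulr_ge0 // divr_ge0 // subr_ge0 ltW.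
have S1 : 1 <= S.
  by rewrite /S big_nat_recl // expr0 lerDl sumr_ge0 // => k _; rewrite exprn_ge0.
have B0 : 0 <= B by rewrite sumr_ge0 // => k _; rewrite mulr_ge0 ?exprn_ge0 ?powR_ge0.
have small : \sum_(0 <= k < K.+1 | ~~ (T < k%:R * ln x)) f ^+ k * x `^ (k%:R * a)
    <= S + c * (f / (1 - f) * S).
  apply: (@le_trans _ _ (\sum_(0 <= k < K.+1 | ~~ (T < k%:R * ln x))
                           (f ^+ k + c * (k%:R * f ^+ k)))).
    apply: ler_sum => k; rewrite -leNgt => kT.
    have kax : 0 <= k%:R * a * ln x <= a * T.
      by rewrite !mulr_ge0 //= mulrAC [a * T]mulrC ler_wpM2r.
    have -> : f ^+ k + c * (k%:R * f ^+ k) =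
              f ^+ k * (1 + k%:R * a * ln x / (1 - a * T)).
      by rewrite /c; field; rewrite gt_eqF ?subr_gt0.
    rewrite /powR gt_eqF ?(lt_le_trans ltr01) //.
    by rewrite ler_wpM2l ?exprn_ge0 ?expR_le_1Ddiv.
  rewrite big_split /= -mulr_sumr lerD ?ler_sum_cond // => [k _|]; first exact: exprn_ge0.
  rewrite ler_wpM2l // (le_trans _ (sum_natmul_expr_le K f01)) // ler_sum_cond // => k _.
  by rewrite mulr_ge0 ?exprn_ge0.
rewrite [leLHS](bigID (fun k => T < k%:R * ln x)) /= -/B.
apply: le_trans (_ : S * (1 + (c * (f / (1 - f)) + B)) <= _); last first.
  by rewrite ler_wpM2l ?expR_ge1Dx // (le_trans ler01 S1).
have : B <= S * B by rewrite ler_peMl.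
nra.
Qed.

Definition primes_upto M := [seq p <- index_iota 0 M.+1 | prime p].

Definition smooth_upto M := pow_prods (primes_upto M) M.

Lemma primes_upto_prime M : all prime (primes_upto M).
Proof. exact: filter_all. Qed.

Lemma smooth_upto_uniq M : uniq (smooth_upto M).
Proof.
by rewrite pow_prods_uniq ?primes_upto_prime // filter_uniq // iota_uniq.
Qed.

Lemma index_iota_sub_smooth M : {subset index_iota 1 M.+1 <= smooth_upto M}.
Proof.
move=> n; rewrite mem_index_iota ltnS => /andP[n0 nM].
apply: mem_pow_prods; rewrite ?primes_upto_prime //; last first.
  by move=> q; exact: leq_trans (logn_leq q n) nM.
move=> q; rewrite mem_primes mem_filter mem_index_iota => /and3P[-> _ qn] /=.
by rewrite ltnS (leq_trans (dvdn_leq n0 qn)).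
Qed.

Lemma lt1_ln (R : realType) (x : R) : 0 < ln x -> 1 < x.
Proof. by move=> lx; rewrite ltNge; apply: contraTN lx => /ln_le0; rewrite leNgt. Qed.

Lemma eseries_le_truncn (R : realType) (u : nat -> R) (y : R) : 0 <= y ->
  (\sum_(1 <= n <oo | (n%:R <= y)%R) (u n)%:E)%E =
  (\sum_(1 <= n < (Num.truncn y).+1) u n)%:E.
Proof.
move=> y0; apply: lim_near_cst => //; near=> M; rewrite sumEFin; congr EFin.
rewrite [RHS](big_nat_widen _ _ M).
  by apply: eq_bigl => n; rewrite ltnS truncn_ge_nat.
by near: M; exact: nbhs_infty_ge.
Unshelve. all: by end_near.
Qed.

Lemma nneseries_bounded {R : realType} {u : nat -> R} {b : R} :
  (forall n, 0 <= u n) -> (forall M, \sum_(1 <= n < M) u n <= b) ->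
  exists s : R, [/\ (\sum_(1 <= n <oo) (u n)%:E)%E = s%:E,
                    forall M, \sum_(1 <= n < M) u n <= s & s <= b].
Proof.
move=> u0 ub.
have partial_le M : ((\sum_(1 <= n < M) u n)%:E <= \sum_(1 <= n <oo) (u n)%:E)%E.
  by rewrite -sumEFin; apply: nneseries_lim_ge => n _ _; rewrite lee_fin.
have Fle : (\sum_(1 <= n <oo) (u n)%:E <= b%:E)%E.
  apply: lime_le; first by apply: is_cvg_nneseries => n _ _; rewrite lee_fin.
  by apply: nearW => M; rewrite sumEFin lee_fin.
move: partial_le Fle; case: (\sum_(1 <= n <oo) (u n)%:E)%E => [s| |] partial_le //.
- by rewrite lee_fin => sb; exists s; split=> // M; rewrite -lee_fin.
- by have := partial_le 0%N; rewrite big_geq.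
Qed.

Section Rankin.
Variables (R : realType) (g : nat -> R).
Hypotheses (g_cm : completely_multiplicative g) (g_ge0 : forall n, 0 <= g n).

Lemma completely_multiplicativeX p k : (0 < p)%N -> g (p ^ k)%N = g p ^+ k.
Proof.
case: g_cm => g1 gM p0; elim: k => [|k IH]; first by rewrite expn0 expr0.
by rewrite expnS gM ?expn_gt0 ?p0 // IH exprS.
Qed.

Lemma rankin_le (s : seq nat) (y a : R) : 0 < y -> 0 <= a ->
  (\sum_(n <- s | y < n%:R) g n) * y `^ a <= \sum_(n <- s) g n * n%:R `^ a.
Proof.
move=> y0 a0; rewrite mulr_suml.
apply: (@le_trans _ _ (\sum_(n <- s | y < n%:R) g n * n%:R `^ a)).
  apply: ler_sum => n /ltW yn.
  by rewrite ler_wpM2l // ge0_ler_powR ?nnegrE ?ler0n // ltW.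
by apply: ler_sum_cond => n _; rewrite mulr_ge0 ?powR_ge0.
Qed.

Lemma big_smooth_upto_powR M (a : R) :
  \sum_(n <- smooth_upto M) g n * n%:R `^ a =
  \prod_(0 <= p < M.+1 | prime p) \sum_(0 <= k < M.+1) g p ^+ k * p%:R `^ (k%:R * a).
Proof.
case: g_cm => g1 gM.
rewrite big_pow_prods ?primes_upto_prime //; last first.
- by move=> m n m0 n0; rewrite gM // natrM powRM ?ler0n // mulrACA.
- by rewrite g1 powR1 mulr1.
rewrite big_filter big_seq_cond [RHS]big_seq_cond; apply: eq_bigr => p.
case/andP=> _ pp; apply: eq_bigr => k _.
rewrite completely_multiplicativeX ?prime_gt0 // natrX.
by rewrite -[p%:R ^+ k]powR_mulrn ?ler0n // -powRrM.
Qed.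

Lemma big_smooth_upto M :
  \sum_(n <- smooth_upto M) g n =
  \prod_(0 <= p < M.+1 | prime p) \sum_(0 <= k < M.+1) g p ^+ k.
Proof.
case: g_cm => g1 gM; rewrite big_pow_prods ?primes_upto_prime // big_filter.
apply: eq_bigr => p pp; apply: eq_bigr => k _.
by rewrite completely_multiplicativeX ?prime_gt0.
Qed.

Hypothesis g_lt1 : forall p, prime p -> g p < 1.

Lemma rankin_euler_le M (y a T : R) : 0 < y -> 0 <= a -> 0 < T -> a * T < 1 ->
  (\sum_(n <- smooth_upto M | y < n%:R) g n) * y `^ a <=
  (\sum_(n <- smooth_upto M) g n) *
  expR (a / (1 - a * T) *
          \sum_(0 <= p < M.+1 | prime p) ln (p%:R : R) * (g p / (1 - g p)) +
        \sum_(0 <= p < M.+1 | prime p)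
          \sum_(1 <= k < M.+1 | T < k%:R * ln (p%:R : R))
            g p ^+ k * p%:R `^ (k%:R * a)).
Proof.
move=> y0 a0 T0 aT1; apply: le_trans (rankin_le _ _ _ y0 a0) _.
rewrite big_smooth_upto_powR big_smooth_upto mulr_sumr -big_split /= expR_sum.
rewrite -big_split /=; apply: ler_prod => p pp; apply/andP; split.
  by rewrite sumr_ge0 // => k _; rewrite mulr_ge0 ?exprn_ge0 ?powR_ge0.
rewrite mulrA.
have -> : \sum_(1 <= k < M.+1 | T < k%:R * ln (p%:R : R)) g p ^+ k * p%:R `^ (k%:R * a) =
          \sum_(0 <= k < M.+1 | T < k%:R * ln (p%:R : R)) g p ^+ k * p%:R `^ (k%:R * a).
  by rewrite [RHS]big_ltn_cond // mul0r ltNge (ltW T0).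
apply: euler_factor_le => //; first by rewrite g_ge0 g_lt1.
by rewrite ler1n prime_gt0.
Qed.

Lemma smooth_tail_le M (y : R) : 1 < ln (ln y) ->
  \sum_(0 <= p < M.+1 | prime p) ln (p%:R : R) * (g p / (1 - g p))
    <= ln y - ln y / ln (ln y) ->
  \sum_(0 <= p < M.+1 | prime p)
     \sum_(1 <= k < M.+1 | ln y / ln (ln y) ^+ 4 < k%:R * ln (p%:R : R))
       g p ^+ k * p%:R `^ (k%:R * alpha_param y) <= 1 ->
  \sum_(n <- smooth_upto M | y < n%:R) g n <=
    expR (2 - ln (ln y)) * \sum_(n <- smooth_upto M) g n.
Proof.
move=> l1 H1 H2.
have L1 : 1 < ln y by apply: lt1_ln; rewrite (lt_trans ltr01).
have y1 : 1 < y by apply: lt1_ln; rewrite (lt_trans ltr01).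
set L := ln y in l1 L1 H1 H2 *; set l := ln L in l1 H1 H2 *.
set a := alpha_param y in H2 *; set T := L / l ^+ 4 in H2.
have aE : a = l ^+ 2 / L by [].
have l0 : 0 < l by lra.
have L0 : 0 < L by lra.
have aT : a * T = (l ^+ 2)^-1 by rewrite aE /T; field; rewrite !gt_eqF.
have l21 : 1 < l ^+ 2 by rewrite -[1](expr1n _ 2) ltrXn2r // ltW.
have aT1 : a * T < 1 by rewrite aT invf_lt1 ?exprn_gt0.
have a0 : 0 <= a by rewrite aE divr_ge0 ?exprn_ge0 // ltW.
have T0 : 0 < T by rewrite divr_gt0 ?exprn_gt0.
have y0 : 0 < y by rewrite (lt_trans ltr01).
have rankin := rankin_euler_le M y a T y0 a0 T0 aT1.
have ya : y `^ a = expR (l ^+ 2).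
  by rewrite /powR gt_eqF // aE -/L; congr expR; field; rewrite gt_eqF.
have expo : a / (1 - a * T) * (L - L / l) <= l ^+ 2 - l + 1.
  have -> : a / (1 - a * T) * (L - L / l) = l ^+ 3 / (l + 1).
    by rewrite aT aE; field; rewrite !gt_eqF ?subr_gt0 ?addr_gt0.
  rewrite ler_pdivrMr ?addr_gt0 //.
  have : (l ^+ 2 - l + 1) * (l + 1) = l ^+ 3 + 1 by ring.
  lra.
have c0 : 0 <= a / (1 - a * T) by rewrite divr_ge0 // subr_ge0 ltW.
rewrite -(ler_pM2r (expR_gt0 (l ^+ 2))) -ya; apply: le_trans rankin _.
rewrite ya [leRHS]mulrAC -expRD [leRHS]mulrC ler_wpM2l ?sumr_ge0 // ler_expR.
have := ler_wpM2l c0 H1; lra.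
Qed.

Lemma partial_sum_le M (y d : R) : 0 <= y -> d <= 1 ->
  \sum_(n <- smooth_upto M | y < n%:R) g n <= d * \sum_(n <- smooth_upto M) g n ->
  (1 - d) * \sum_(1 <= n < M.+1) g n <= \sum_(1 <= n < (Num.truncn y).+1) g n.
Proof.
move=> y0 d1 tail; set P := \sum_(n <- smooth_upto M) g n in tail *.
have SP : \sum_(1 <= n < M.+1) g n <= P.
  apply: ler_sum_subseq; rewrite ?iota_uniq ?smooth_upto_uniq //.
  exact: index_iota_sub_smooth.
have low : \sum_(n <- smooth_upto M | ~~ (y < n%:R)) g n <=
           \sum_(1 <= n < (Num.truncn y).+1) g n.
  rewrite -big_filter; apply: ler_sum_subseq => //.
  - by rewrite filter_uniq ?smooth_upto_uniq.
  - by rewrite iota_uniq.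
  - move=> n; rewrite mem_filter -leNgt mem_index_iota ltnS truncn_ge_nat //.
    by case/andP=> -> /(pow_prods_gt0 (primes_upto_prime M)) ->.
have PE : P = \sum_(n <- smooth_upto M | y < n%:R) g n +
              \sum_(n <- smooth_upto M | ~~ (y < n%:R)) g n.
  by rewrite /P (bigID (fun n => y < n%:R)).
have : (1 - d) * \sum_(1 <= n < M.+1) g n <= (1 - d) * P by rewrite ler_wpM2l ?subr_ge0.
have : (1 - d) * P = P - d * P by ring.
lra.
Qed.

Lemma nneseries_truncation_bounds (y : R) : 2 < ln (ln y) ->
  (\sum_(0 <= p <oo | prime p) ((ln (p%:R : R) * (g p / (1 - g p)))%:E) <
     (ln y - ln y / ln (ln y))%:E)%E ->
  (\sum_(0 <= p <oo | prime p)
     \sum_(1 <= k <oo | (ln y / ln (ln y) ^+ 4 < k%:R * ln (p%:R : R))%R)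
       ((g p ^+ k * (p%:R : R) `^ (k%:R * alpha_param y))%:E) <= 1%:E)%E ->
  exists r s : R,
    [/\ (\sum_(1 <= n <oo | (n%:R <= y)%R) (g n)%:E)%E = r%:E,
        (\sum_(1 <= n <oo) (g n)%:E)%E = s%:E, 0 < r &
        (1 - expR (2 - ln (ln y))) * s <= r <= s].
Proof.
move=> l2 H1 H2.
have L1 : 1 < ln y by apply: lt1_ln; rewrite (lt_trans _ l2).
have y1 : 1 < y by apply: lt1_ln; rewrite (lt_trans ltr01 L1).
have y0 : 0 <= y by rewrite (le_trans ler01) ?ltW.
set d := expR (2 - ln (ln y)).
have d1 : d < 1 by rewrite expR_lt1 subr_lt0.
set Y := (Num.truncn y).+1.
set Ar := \sum_(1 <= n < Y) g n.
have Ar1 : 1 <= Ar.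
  rewrite /Ar big_ltn ?ltnS ?truncn_gt0 ?(ltW y1) //; case: g_cm => -> _.
  by rewrite lerDl sumr_ge0.
have H1_upto M : \sum_(0 <= p < M.+1 | prime p) ln (p%:R : R) * (g p / (1 - g p))
    <= ln y - ln y / ln (ln y).
  rewrite -lee_fin -sumEFin; apply: ltW; apply: le_lt_trans H1.
  apply: nneseries_lim_ge => p _ pp.
  rewrite lee_fin mulr_ge0 ?ln_ge0 ?ler1n ?prime_gt0 //.
  by rewrite divr_ge0 // subr_ge0 ltW // g_lt1.
have H2_upto M : \sum_(0 <= p < M.+1 | prime p)
     \sum_(1 <= k < M.+1 | ln y / ln (ln y) ^+ 4 < k%:R * ln (p%:R : R))
       g p ^+ k * p%:R `^ (k%:R * alpha_param y) <= 1.
  have term0 k p : (0 <= (g p ^+ k * p%:R `^ (k%:R * alpha_param y))%:E)%E.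
    by rewrite lee_fin mulr_ge0 ?exprn_ge0 ?powR_ge0.
  rewrite -lee_fin -sumEFin; apply: le_trans H2.
  apply: le_trans (nneseries_lim_ge M.+1 _); last first.
    by move=> p _ _; apply: nneseries_ge0.
  by apply: lee_sum => p _; rewrite -sumEFin; apply: nneseries_lim_ge.
have SM M : \sum_(1 <= n < M) g n <= Ar / (1 - d).
  rewrite ler_pdivlMr ?subr_gt0 // mulrC; case: M => [|M].
    by rewrite big_geq // mulr0 sumr_ge0.
  apply: partial_sum_le => //; first exact: ltW.
  by apply: smooth_tail_le => //; rewrite (lt_trans _ l2) // ltr1n.
have [s [-> partial_s sAr]] := nneseries_bounded g_ge0 SM.
exists Ar, s; rewrite eseries_le_truncn //; split => //.
  by rewrite (lt_le_trans ltr01).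
by rewrite partial_s andbT -ler_pdivlMl ?subr_gt0 // mulrC.
Qed.

End Rankin.

Lemma ratio_sub1_bounds {R : realFieldType} {r s d : R} : 0 < r ->
  (1 - d) * s <= r <= s -> - d <= r / s - 1 <= 0.
Proof.
move=> r0 /andP[lo hi]; have s0 : 0 < s by rewrite (lt_le_trans r0).
have -> : r / s - 1 = (r - s) / s by field; rewrite gt_eqF.
rewrite ler_pdivlMr // ler_pdivrMr // mul0r mulNr.
by move: lo; rewrite mulrBl mul1r; lra.
Qed.

Lemma cvge_le_near {R : realFieldType} {T : Type} {F : set_system T} {FF : Filter F}
    {u : T -> \bar R} {l z : R} :
  l < z -> u @ F --> l%:E -> \forall t \near F, (u t <= z%:E)%E.
Proof.
move=> lz ul; apply: (ul [set x | (x <= z%:E)%E]); apply/nbhs_EFin.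
by apply: filterS (lt_le_nbhsl lz) => x; rewrite /= lee_fin.
Qed.

Lemma cvgy_ln {R : realType} {u : nat -> R} :
  u @ \oo --> +oo -> (fun i => ln (u i)) @ \oo --> +oo.
Proof.
move=> /cvgryPge u_oo; apply/cvgryPge => A.
apply: filterS (u_oo (expR A)) => i /= Au.
by rewrite -[A]expRK ler_ln ?posrE ?(lt_le_trans (expR_gt0 A)).
Qed.

Lemma expR_2Blnln_cvg0 {R : realType} {y : nat -> R} : y @ \oo --> +oo ->
  (fun i => expR (2 - ln (ln (y i)))) @ \oo --> 0.
Proof.
move=> /cvgy_ln/cvgy_ln/cvgryPge lnln_oo.
have : (fun i => ln (ln (y i)) - 2) @ \oo --> +oo.
  by apply/cvgryPge => M; apply: filterS (lnln_oo (M + 2)) => i /=; lra.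
have -> : (fun i => expR (2 - ln (ln (y i)))) =
          (fun x => expR (- x)) \o (fun i => ln (ln (y i)) - 2).
  by apply/funext => i /=; rewrite opprB.
by move/cvg_comp; apply; exact: cvgr_expR.
Qed.

Theorem mainTheorem9 (R : realType) (f : nat -> nat -> R) (y : nat -> R) :
  (forall i, completely_multiplicative (f i)) ->
  (forall i n, 0 <= f i n) ->
  (forall i p, prime p -> f i p < 1) ->
  y @ \oo --> +oo ->
  (forall i,
     (\sum_(0 <= p <oo | prime p)
         ((ln (p%:R : R) * (f i p / (1 - f i p)))%:E) <
      (ln (y i) - ln (y i) / ln (ln (y i)))%:E)%E) ->
  (fun i => (\sum_(0 <= p <oo | prime p)
               \sum_(1 <= k <oo | (ln (y i) / (ln (ln (y i))) ^+ 4
                                   < k%:R * ln (p%:R : R))%R)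
                 ((f i p ^+ k * (p%:R : R) `^ (k%:R * alpha_param (y i)))%:E))%E)
    @ \oo --> 0%E ->
  exists eps : nat -> R, eps @ \oo --> 0 /\
    \forall i \near \oo,
      (\sum_(1 <= n <oo | (n%:R <= y i)%R) (f i n)%:E =
       (1 + eps i)%:E * \sum_(1 <= n <oo) (f i n)%:E)%E.
Proof.
move=> f_cm f_ge0 f_lt1 y_oo H1 /(cvge_le_near ltr01) H2.
set A := fun i => (\sum_(1 <= n <oo | (n%:R <= y i)%R) (f i n)%:E)%E.
set F := fun i => (\sum_(1 <= n <oo) (f i n)%:E)%E.
set d := fun i => expR (2 - ln (ln (y i))).
have bounds : \forall i \near \oo, exists r s : R,
    [/\ A i = r%:E, F i = s%:E, 0 < r & (1 - d i) * s <= r <= s].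
  near=> i; apply: nneseries_truncation_bounds (f_cm i) (f_ge0 i) (f_lt1 i) _ _ (H1 i) _.
  - by near: i; exact: (cvgryPgt _).1 (cvgy_ln (cvgy_ln y_oo)) 2.
  - by near: i.
exists (fun i => fine (A i) / fine (F i) - 1); split.
  apply: (@squeeze_cvgr _ _ _ _ (fun i => - d i) d); last first.
  - exact: expR_2Blnln_cvg0.
  - by rewrite -oppr0; apply: cvgN; exact: expR_2Blnln_cvg0.
  near=> i; have [//|r [s [-> -> r0 rs]]] := near bounds i.
  have /andP[-> /le_trans ->] := ratio_sub1_bounds r0 rs; rewrite ?expR_ge0 //.
near=> i; change (A i = (1 + (fine (A i) / fine (F i) - 1))%:E * F i)%E.
have [//|r [s [-> -> r0 /andP[_ rs]]]] := near bounds i.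
by rewrite /= -EFinM; congr EFin; field; rewrite gt_eqF ?(lt_le_trans r0).
Unshelve. all: by end_near.
Qed.
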